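(* Let $p$ be a prime with $p\notin\{2,3,7,43\}$. Then $\{p,2p,6p,42p,1806p\}\subseteq\mathcal{M}_p^{(1)}$.
   Context: For positive integers $k,n$ let $S_k(n)=\sum_{i=1}^{n} i^k$. For an integer $a$, $\mathcal{M}_a$ denotes the set of positive integers $n$ such that $S_n(n)\equiv a\pmod{n}$. For a prime $p$, $\mathcal{M}_p^{(1)}=\{n\in\mathcal{M}_p : p\mid n,\ p^2\nmid n\}$. *)

From mathcomp Require Import all_boot.
Set Implicit Arguments. Unset Strict Implicit. Unset Printing Implicit Defensive.

Definition S (k n : nat) : nat := \sum_(1 <= i < n.+1) i ^ k.

Definition inM (a n : nat) : Prop := 0 < n /\ S n n = a %[mod n].

Definition inM1 (p n : nat) : Prop := inM p n /\ p %| n /\ ~~ (p ^ 2 %| n).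

From mathcomp Require Import all_boot all_algebra all_field.
Import GRing.Theory.

(* Write n = k p with k the product of a set s of primes not containing p.
   Modulo a prime q dividing n, S_n(n) is n/q times the power sum of the
   n-th powers over F_q, which is -1 if q - 1 divides n and 0 otherwise.
   Modulo p this gives 0 as soon as p - 1 does not divide k; modulo a prime
   q of s with q - 1 | k and q | k/q + 1 it gives (k/q)(q - 1) p = p.  For
   k = 1, 2, 6, 42, 1806 both conditions hold, and p - 1 cannot divide k
   since the only primes d + 1 with d | 1806 are 2, 3, 7 and 43.  The
   Chinese remainder theorem then yields S_n(n) = p (mod n). *)

Section PeriodicSums.
Variables (V : nmodType) (F : nat -> V) (q : nat).
Hypothesis F_periodic : forall i, F (i + q) = F i.
Local Open Scope ring_scope.

Lemma sum_nat_periodic m :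
  \sum_(0 <= i < m * q) F i = (\sum_(0 <= i < q) F i) *+ m.
Proof.
have F_iter i j : F (j + i * q)%N = F j.
  by elim: i j => [|i IH] j; rewrite ?addn0 // mulSn addnA IH F_periodic.
rewrite big_nat_mul -[m in RHS]subn0 -sumr_const_nat; apply: eq_bigr => i _.
rewrite -[(i * q)%N]add0n big_addn mulSn addnK.
by apply: eq_bigr => j _; rewrite F_iter.
Qed.

End PeriodicSums.

Section PowerSums.
Variable F : finFieldType.
Local Open Scope ring_scope.

Lemma expf_card_pred (x : F) : x != 0 -> x ^+ #|F|.-1 = 1.
Proof.
move=> x_nz; apply: (mulfI x_nz).
by rewrite -exprS prednK ?expf_card ?mulr1 // (cardD1 x).
Qed.

Lemma sum_expr_card_pred_dvd k :
  (0 < k)%N -> (#|F|.-1 %| k)%N -> \sum_(x : F) x ^+ k = (#|F|.-1)%:R.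
Proof.
move=> k_gt0 /dvdnP[m def_k]; rewrite (bigD1 0) //= expr0n (gtn_eqF k_gt0) add0r.
rewrite (eq_bigr (fun _ => 1)) => [|x x_nz]; last first.
  by rewrite def_k mulnC exprM expf_card_pred // expr1n.
by rewrite sumr_const cardC1.
Qed.

Lemma exists_expr_neq1 k :
  ~~ (#|F|.-1 %| k)%N -> exists2 g : F, g != 0 & g ^+ k != 1.
Proof.
move=> k_ndvd.
have /existsP[g /andP[g_nz gk]] : [exists g : F, (g != 0) && (g ^+ k != 1)];
  last by exists g.
apply: contraR k_ndvd => /existsPn all_roots.
apply/negPn/negP; rewrite -lt0n => r_gt0.
have r_lt : (k %% #|F|.-1 < #|F|.-1)%N by rewrite ltn_mod -subn1 subn_gt0 finNzRing_gt1.
suff /(max_unity_roots r_gt0)/(_ (enum_uniq _)) :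
    all (k %% #|F|.-1).-unity_root (enum [pred x : F | x != 0]).
  by rewrite -cardE cardC1 leqNgt r_lt.
apply/allP => x; rewrite mem_enum unity_rootE inE => x_nz.
move: (all_roots x); rewrite x_nz negbK => /eqP {1}<-.
by rewrite {2}(divn_eq k #|F|.-1) exprD mulnC exprM expf_card_pred // expr1n mul1r.
Qed.

Lemma sum_expr_card_pred_ndvd k :
  ~~ (#|F|.-1 %| k)%N -> \sum_(x : F) x ^+ k = 0.
Proof.
move=> /exists_expr_neq1[g g_nz gk_neq1].
have sum_eq : \sum_(x : F) x ^+ k = g ^+ k * \sum_(x : F) x ^+ k.
  transitivity (\sum_(x : F) (g * x) ^+ k); first exact: reindex_inj (mulfI g_nz).
  by rewrite mulr_sumr; apply: eq_bigr => x _; rewrite exprMn.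
have : (1 - g ^+ k) * \sum_(x : F) x ^+ k = 0 by rewrite mulrBl mul1r -sum_eq subrr.
by move/eqP; rewrite mulf_eq0 subr_eq0 eq_sym (negbTE gk_neq1) => /eqP.
Qed.

End PowerSums.

Section PrimeField.
Variable q : nat.
Hypothesis q_pr : prime q.
Local Open Scope ring_scope.

Lemma eqFp_nat a b : ((a%:R : 'F_q) == b%:R) = (a == b %[mod q])%N.
Proof.
apply/eqP/eqP => [|eq_ab]; last by rewrite -Fp_nat_mod // eq_ab Fp_nat_mod.
by rewrite -(val_Fp_nat q_pr a) -(val_Fp_nat q_pr b) => ->.
Qed.

Lemma sum_Fp_nat (V : nmodType) (f : 'F_q -> V) :
  \sum_(x : 'F_q) f x = \sum_(0 <= i < q) f i%:R.
Proof.
have nat_inj : injective (fun i : 'I_q => (i%:R : 'F_q)).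
  move=> i j /eqP; rewrite eqFp_nat !modn_small // => /eqP; exact: val_inj.
rewrite big_mkord (reindex (fun i : 'I_q => (i%:R : 'F_q))) //.
by apply: onW_bij; apply: inj_card_bij nat_inj _; rewrite card_Fp // card_ord.
Qed.

Lemma natr_S_dvd k n :
  (q %| n)%N -> (S k n)%:R = (n %/ q)%:R * \sum_(x : 'F_q) x ^+ k :> 'F_q.
Proof.
move=> /dvdnP[m ->]; rewrite mulnK ?prime_gt0 //.
pose G i := (i%:R : 'F_q) ^+ k.
have G_mul_q : G (m * q)%N = G 0 by rewrite /G natrM pchar_Fp_0 // mulr0.
have S_shift : (S k (m * q))%:R = \sum_(0 <= i < m * q) G i.
  rewrite /S natr_sum; under eq_bigr do rewrite natrX.
  apply: (@addrI _ (G 0)); rewrite big_add1 succnK -(big_nat_recl _ _ G) //.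
  by rewrite big_nat_recr //= G_mul_q addrC.
rewrite S_shift sum_nat_periodic => [|i]; last by rewrite /G natrD pchar_Fp_0 ?addr0.
by rewrite sum_Fp_nat mulr_natl.
Qed.

Lemma Fp_nat_eqN1 m : (q %| m.+1)%N -> (m%:R : 'F_q) = -1.
Proof.
move=> /dvdnP[c eq_m]; apply/eqP; rewrite -addr_eq0 natr1 eq_m natrM.
by rewrite pchar_Fp_0 // mulr0.
Qed.

End PrimeField.

Lemma prime_dvd_prod_primes (s : seq nat) p :
  prime p -> all prime s -> (p %| \prod_(q <- s) q) = (p \in s).
Proof.
move=> p_pr s_pr; rewrite Euclid_dvd_prod // big_has.
apply/hasP/idP => [[q q_in] | p_in]; last by exists p.
by rewrite dvdn_prime2 // ?(allP s_pr) // => /eqP ->.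
Qed.

Lemma eqn_mod_prod_primes (s : seq nat) a b :
  uniq s -> all prime s -> {in s, forall q, a = b %[mod q]} ->
  a = b %[mod \prod_(q <- s) q].
Proof.
elim: s => [|q s IH] /=; first by rewrite big_nil !modn1.
case/andP=> q_notin s_uniq /andP[q_pr s_pr] eq_ab; rewrite big_cons.
apply/eqP; rewrite chinese_remainder; last first.
  by rewrite prime_coprime // prime_dvd_prod_primes.
have eq_ab_s : {in s, forall r, a = b %[mod r]}.
  by move=> r r_in; apply: eq_ab; rewrite inE r_in orbT.
by rewrite (eq_ab q) ?mem_head // IH // !eqxx.
Qed.

Section ProductOfPrimes.
Variables (s : seq nat) (p : nat).
Local Notation k := (\prod_(q <- s) q).
Hypotheses (s_uniq : uniq s) (s_prime : all prime s).
Hypothesis pred_dvd_prod : {in s, forall q, q.-1 %| k}.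
(* k is a primary pseudoperfect number. *)
Hypothesis dvd_cofactor_succ : {in s, forall q, q %| (k %/ q).+1}.
Hypotheses (p_pr : prime p) (pred_p_ndvd_prod : ~~ (p.-1 %| k)).

Lemma prod_gt0 : 0 < k.
Proof. by rewrite lt0n; apply: contraNneq pred_p_ndvd_prod => ->; apply: dvdn0. Qed.

Lemma prime_ndvd_prod : ~~ (p %| k).
Proof.
by rewrite prime_dvd_prod_primes //; apply: contra pred_p_ndvd_prod; apply: pred_dvd_prod.
Qed.

Lemma S_prod_mul_mod_factor q : q \in s -> S (k * p) (k * p) = p %[mod q].
Proof.
move=> q_in; have q_pr := allP s_prime q q_in.
have q_dvd_prod : q %| k by rewrite prime_dvd_prod_primes.
apply/eqP; rewrite -eqFp_nat // natr_S_dvd ?dvdn_mulr // sum_expr_card_pred_dvd; last first.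
- by rewrite card_Fp // dvdn_mulr ?pred_dvd_prod.
- by rewrite muln_gt0 prod_gt0 prime_gt0.
rewrite card_Fp // -divn_mulAC // natrM Fp_nat_eqN1 ?dvd_cofactor_succ //.
by rewrite (@Fp_nat_eqN1 q q_pr q.-1) ?prednK ?prime_gt0 // mulN1r mulrN1 opprK.
Qed.

Lemma S_prod_mul_mod_p : S (k * p) (k * p) = p %[mod p].
Proof.
apply/eqP; rewrite -eqFp_nat // natr_S_dvd ?dvdn_mull // sum_expr_card_pred_ndvd.
  by rewrite mulr0 pchar_Fp_0.
by rewrite card_Fp // Gauss_dvdl ?coprimePn ?prime_gt0.
Qed.

Lemma inM1_prod_mul : inM1 p (k * p).
Proof.
split; [split | split].
- by rewrite muln_gt0 prod_gt0 prime_gt0.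
- apply/eqP; rewrite chinese_remainder; last first.
    by rewrite coprime_sym prime_coprime // prime_ndvd_prod.
  rewrite S_prod_mul_mod_p eqxx andbT; apply/eqP.
  by apply: eqn_mod_prod_primes => // q; apply: S_prod_mul_mod_factor.
- exact: dvdn_mull.
- by rewrite -mulnn dvdn_pmul2r ?prime_gt0 // prime_ndvd_prod.
Qed.

End ProductOfPrimes.

Lemma prime_succ_divisor_1806 d : prime d.+1 -> d %| 1806 -> d.+1 \in [:: 2; 3; 7; 43].
Proof.
have divisors_1806 :
  divisors 1806 = [:: 1; 2; 3; 6; 7; 14; 21; 42; 43; 86; 129; 258; 301; 602; 903; 1806].
  by vm_compute.
have succ_primes : all (fun d => prime d.+1 ==> (d.+1 \in [:: 2; 3; 7; 43]))
    (divisors 1806) by rewrite divisors_1806; vm_compute.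
move=> d_pr; rewrite (dvdn_divisors d (isT : 0 < 1806)).
by move=> /(allP succ_primes); rewrite d_pr.
Qed.

Theorem mainTheorem17 (p : nat) :
  prime p -> p \notin [:: 2; 3; 7; 43] ->
  forall n, n \in [:: p; 2 * p; 6 * p; 42 * p; 1806 * p] -> inM1 p n.
Proof.
move=> p_pr p_exc n.
pose chain := [:: [::]; [:: 2]; [:: 2; 3]; [:: 2; 3; 7]; [:: 2; 3; 7; 43]].
have -> : [:: p; 2 * p; 6 * p; 42 * p; 1806 * p] = [seq \prod_(q <- s) q * p | s <- chain].
  by rewrite /= !big_cons !big_nil !muln1 mul1n.
case/mapP=> s s_in ->.
have chain_ok : all (fun s => [&& uniq s, all prime s,
    all (fun q => (q.-1 %| \prod_(r <- s) r) && (q %| (\prod_(r <- s) r %/ q).+1)) s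
  & \prod_(r <- s) r %| 1806]) chain.
  by rewrite unlock; vm_compute.
have /and4P[s_uniq s_prime s_factors s_dvd_1806] := allP chain_ok s s_in.
apply: inM1_prod_mul => // [q /(allP s_factors)/andP[] // | q /(allP s_factors)/andP[] // |].
apply: contra p_exc => /dvdn_trans/(_ s_dvd_1806) pred_p_dvd.
by rewrite -(prednK (prime_gt0 p_pr)) prime_succ_divisor_1806 // prednK // prime_gt0.
Qed.
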